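(* Let $\mathcal{M}=(E,\mathcal{C})$ be a loopless oriented matroid with ground set $E=\{e_1,\dots,e_m\}$ totally ordered by $e_1\prec e_2\prec\cdots\prec e_m$, and let $\mathscr{N}_k$ ($0\le k\le m$) and $\psi_k:\mathscr{N}_{k-1}\to\mathscr{N}_k$ ($1\le k\le m$) be as defined in the context. Then each $\psi_k$ is a bijection from $\mathscr{N}_{k-1}$ onto $\mathscr{N}_k$, and consequently the map sending $A\in A(\mathcal{M})$ to the unique set $N\subseteq E$ with $\psi_m\circ\psi_{m-1}\circ\cdots\circ\psi_1(\emptyset,A)=(N,\emptyset)$ is a bijection from $A(\mathcal{M})$ onto $\mathrm{NBC}(\underline{\mathcal{M}})$.
   Context: A signed subset of a finite set $E$ is a pair $X=(X^+,X^-)$ of disjoint subsets of $E$; its support is $\underline{X}=X^+\cup X^-$ and $-X=(X^-,X^+)$. An oriented matroid $\mathcal{M}=(E,\mathcal{C})$ is a finite set $E$ with a collection $\mathcal{C}$ of signed subsets (signed circuits) such that: (C1) the empty signed set is not in $\mathcal{C}$; (C2) $\mathcal{C}=-\mathcal{C}$; (C3) if $X,Y\in\mathcal{C}$ and $\underline{X}\subseteq\underline{Y}$ then $X=\pm Y$; (C4) if $X,Y\in\mathcal{C}$, $X\neq -Y$, $X\ne Y$ and $e\in X^+\cap Y^-$, then there is $Z\in\mathcal{C}$ with $Z^+\subseteq X^+\cup Y^+-\{e\}$ and $Z^-\subseteq X^-\cup Y^--\{e\}$. The underlying matroid $\underline{\mathcal{M}}$ has circuits $\{\underline{X}:X\in\mathcal{C}\}$.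 A loop is a single element forming a circuit; $\mathcal{M}$ is loopless if it has none. A signed circuit $X$ is positive if $X^-=\emptyset$; $\mathcal{M}$ is acyclic if it has no positive circuits. For $A\subseteq E$, the reorientation ${}_{-A}\mathcal{M}$ has signed circuits ${}_{-A}X$ with ${}_{-A}X^+=(X^+-A)\cup(X^-\cap A)$, ${}_{-A}X^-=(X^--A)\cup(X^+\cap A)$; for a single element we write ${}_{-e}$. $A(\mathcal{M})=\{A\subseteq E: {}_{-A}\mathcal{M}\text{ is acyclic}\}$. For $X\subseteq E$: deletion $\mathcal{M}\backslash X$ on $E-X$ has signed circuits $\{Y\in\mathcal{C}:\underline{Y}\subseteq E-X\}$; contraction $\mathcal{M}/X$ on $E-X$ has signed circuits the inclusion-minimal nonempty members (by support) of $\{(Y^+-X,Y^--X):Y\in\mathcal{C},\ \underline{Y}-X\neq\emptyset\}$. A broken circuit of $\underline{\mathcal{M}}$ is a circuit with its $\prec$-maximal element removed; $N\subseteq E$ is an NBC subset if it contains no broken circuit; $\mathrm{NBC}(\underline{\mathcal{M}})$ is the set of NBC subsets. Let $E_k=\{e_1,\dots,e_k\}$. For $N_k\subseteq E_k$ put $N_k^c=E_k-N_k$. $\mathscr{N}_k$ is the set of pairs $(N_k,A_k)$ with $N_k\subseteq E_k$, $A_k\subseteq E-E_k$, $N_k\in\mathrm{NBC}(\underline{\mathcal{M}})$, and $\mathcal{M}_k:={}_{-A_k}(\mathcal{M}\backslash N_k^c/N_k)$ (an oriented matroid on $E-E_k$) acyclic. For $(N_{k-1},A_{k-1})\in\mathscr{N}_{k-1}$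 with $\mathcal{M}_{k-1}={}_{-A_{k-1}}(\mathcal{M}\backslash N_{k-1}^c/N_{k-1})$, define $\psi_k(N_{k-1},A_{k-1})$ to be $(N_{k-1}\cup\{e_k\},A_{k-1})$ if $e_k\notin A_{k-1}$ and ${}_{-e_k}\mathcal{M}_{k-1}$ is acyclic; $(N_{k-1},A_{k-1})$ if $e_k\notin A_{k-1}$ and ${}_{-e_k}\mathcal{M}_{k-1}$ is not acyclic; $(N_{k-1},A_{k-1}-\{e_k\})$ if $e_k\in A_{k-1}$. *)

(* Ground set E = {e_1,...,e_m} is encoded as 'I_m, with
   e_k the ordinal of value k-1, and the total order e_1 < ... < e_m the
   natural order of ordinals. Oriented matroids on a subset S of 'I_m
   (needed for minors, whose ground set is E - X) are encoded by their set of
   signed circuits, all supported inside S. *)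
From mathcomp Require Import all_boot.
Set Implicit Arguments. Unset Strict Implicit. Unset Printing Implicit Defensive.

Section OM.
Variable m : nat.
Notation T := 'I_m.

(* A signed subset X = (X^+, X^-). *)
Definition signed := ({set T} * {set T})%type.

Definition supp (X : signed) : {set T} := X.1 :|: X.2.
Definition negs (X : signed) : signed := (X.2, X.1).

Definition is_OM (S : {set T}) (C : {set signed}) : Prop :=
  [/\ (forall X, X \in C -> [disjoint X.1 & X.2] /\ supp X \subset S),
      (set0, set0) \notin C,
      (forall X, X \in C -> negs X \in C),
      (forall X Y, X \in C -> Y \in C -> supp X \subset supp Y ->
          X = Y \/ X = negs Y) &
      (forall X Y e, X \in C -> Y \in C -> X != negs Y -> X != Y ->
          e \in X.1 -> e \in Y.2 ->
          exists2 Z, Z \in C &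
            Z.1 \subset (X.1 :|: Y.1) :\ e /\ Z.2 \subset (X.2 :|: Y.2) :\ e)].

Definition loopless (C : {set signed}) : Prop :=
  forall X, X \in C -> #|supp X| != 1.

Definition reorient (A : {set T}) (X : signed) : signed :=
  ((X.1 :\: A) :|: (X.2 :&: A), (X.2 :\: A) :|: (X.1 :&: A)).
Definition reor (A : {set T}) (C : {set signed}) : {set signed} :=
  [set reorient A X | X in C].

Definition acyclic (C : {set signed}) : bool :=
  [forall X in C, X.2 != set0].

Definition del (X : {set T}) (C : {set signed}) : {set signed} :=
  [set Y in C | supp Y \subset ~: X].

Definition con_cands (X : {set T}) (C : {set signed}) : {set signed} :=
  [set ((Y.1 :\: X, Y.2 :\: X) : signed) | Y in C & supp Y :\: X != set0].
Definition con (X : {set T}) (C : {set signed}) : {set signed} :=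
  [set Z in con_cands X C |
     [forall W in con_cands X C, ~~ (supp W \proper supp Z)]].

Definition contains_broken_circuit (C : {set signed}) (N : {set T}) : bool :=
  [exists X in C, exists e in supp X,
     [forall f in supp X, f <= e] && (supp X :\ e \subset N)].
Definition NBC (C : {set signed}) (N : {set T}) : bool :=
  ~~ contains_broken_circuit C N.

Definition Ek (k : nat) : {set T} := [set i : T | i < k].

Definition Mk (C : {set signed}) (k : nat) (N A : {set T}) : {set signed} :=
  reor A (con N (del (Ek k :\: N) C)).

Definition NN (C : {set signed}) (k : nat) : {set signed} :=
  [set p : signed | [&& p.1 \subset Ek k, p.2 \subset ~: Ek k,
                        NBC C p.1 & acyclic (Mk C k p.1 p.2)]].

(* psi_k for k = e.+1, where e : 'I_m is e_k (value k-1). *)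
Definition psi (C : {set signed}) (e : T) (p : signed) : signed :=
  if e \notin p.2 then
    if acyclic (reor [set e] (Mk C e p.1 p.2)) then (e |: p.1, p.2)
    else p
  else (p.1, p.2 :\ e).

Definition psi_all (C : {set signed}) (A : {set T}) : signed :=
  foldl (fun p e => psi C e p) ((set0, A) : signed) (enum 'I_m).

Definition AM (C : {set signed}) : {set {set T}} :=
  [set A : {set T} | acyclic (reor A C)].
Definition NBCset (C : {set signed}) : {set {set T}} :=
  [set N : {set T} | NBC C N].

End OM.

From mathcomp Require Import all_boot.
Set Implicit Arguments. Unset Strict Implicit. Unset Printing Implicit Defensive.

(* Let N be an NBC set, hence independent.  The circuits of the minor
   M \ D / N are the inclusion-minimal restrictions Y - N of circuits Y of M
   avoiding D, and circuit elimination shows that such a minor is acyclic iff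
   no circuit Y avoiding D has Y^- inside N without lying inside N (such a Y
   is a [pos_witness]; see [acyclic_conE]).  In these terms psi_k adds
   e = e_k to N exactly when neither orientation of e produces such a
   circuit, and N ∪ {e} is then again NBC, since a broken circuit through e
   would produce one.  The map psi_k has an explicit inverse [psi_inv]; the
   one non-formal point is that when both orientations of e produce such
   circuits, eliminating e between them gives one avoiding e
   ([pos_witness_reorU1_exclusive]).  Composing the psi_k matches
   N_0 = {(∅, A) : A ∈ A(M)} with N_m = {(N, ∅) : N NBC}. *)

Ltac in_cases :=
  repeat match goal with |- context [?a \in ?S] => case: (a \in S) end; try done.

Section SignedCircuits.
Variable m : nat.
Implicit Types (A D N : {set 'I_m}) (X Y Z : signed m) (C : {set signed m}).

Definition circuit_elim C : Prop :=
  forall X Y e, X \in C -> Y \in C -> X != negs Y -> X != Y ->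
    e \in X.1 -> e \in Y.2 ->
  exists2 Z, Z \in C & Z.1 \subset (X.1 :|: Y.1) :\ e /\ Z.2 \subset (X.2 :|: Y.2) :\ e.

Definition signs_disjoint C : Prop := forall X, X \in C -> [disjoint X.1 & X.2].

Definition contract_signed N Y : signed m := (Y.1 :\: N, Y.2 :\: N).

Lemma reorientK A : involutive (reorient A).
Proof.
by case=> X1 X2; congr pair; apply/setP=> x; rewrite !inE; in_cases.
Qed.

Lemma reorient_inj A : injective (reorient A).
Proof. exact: inv_inj (reorientK A). Qed.

Lemma mem_reor A C Y : (Y \in reor A C) = (reorient A Y \in C).
Proof. by rewrite /reor (can_imset_pre _ (reorientK A)) inE. Qed.

Lemma supp_reorient A Y : supp (reorient A Y) = supp Y.
Proof. by case: Y => Y1 Y2; apply/setP=> x; rewrite !inE; in_cases. Qed.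

Lemma supp_negs Y : supp (negs Y) = supp Y.
Proof. exact: setUC. Qed.

Lemma reorient_negs A Y : reorient A (negs Y) = negs (reorient A Y).
Proof. by case: Y. Qed.

Lemma supp_contract N Y : supp (contract_signed N Y) = supp Y :\: N.
Proof. by rewrite /supp setDUl. Qed.

Lemma reorient_contract A N Y :
  reorient A (contract_signed N Y) = contract_signed N (reorient A Y).
Proof. by case: Y => Y1 Y2; congr pair; apply/setP=> x; rewrite !inE; in_cases. Qed.

Lemma eq_in_reorient A A' Y : {in supp Y, A =i A'} -> reorient A Y = reorient A' Y.
Proof.
case: Y => Y1 Y2 eqA; congr pair; apply/setP => x;
  have := eqA x; rewrite !inE; in_cases; by move=> ->.
Qed.

Lemma reorientU1 A e Y : e \notin A ->
  reorient A (reorient [set e] Y) = reorient (e |: A) Y.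
Proof.
move=> eA; case: Y => Y1 Y2; congr pair; apply/setP => x; rewrite /= !inE;
  by case: (eqVneq x e) => [->|]; rewrite ?(negbTE eA); in_cases.
Qed.

Lemma reorU1 A e C : e \notin A -> reor (e |: A) C = reor [set e] (reor A C).
Proof. by move=> eA; apply/setP => Y; rewrite !mem_reor reorientU1. Qed.

Lemma reor_disjoint A C : signs_disjoint C -> signs_disjoint (reor A C).
Proof.
move=> disjC X; rewrite mem_reor => /disjC; rewrite !disjoint_subset => /subsetP sX.
by apply/subsetP => x; move: (sX x); case: X {sX} => X1 X2; rewrite !inE; in_cases.
Qed.

Lemma reorient_elim_bound A e X Y Z :
    Z.1 \subset (X.1 :|: Y.1) :\ e -> Z.2 \subset (X.2 :|: Y.2) :\ e ->
  (reorient A Z).1 \subset ((reorient A X).1 :|: (reorient A Y).1) :\ e /\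
  (reorient A Z).2 \subset ((reorient A X).2 :|: (reorient A Y).2) :\ e.
Proof.
move=> /subsetP Z1 /subsetP Z2; split; apply/subsetP => x;
  move: (Z1 x) (Z2 x); rewrite !inE; case: (x == e); in_cases.
Qed.

Lemma reor_elim A C : circuit_elim C -> circuit_elim (reor A C).
Proof.
move=> elimC X Y e; rewrite !mem_reor => XC YC nXnY nXY eX eY.
have nXY' : reorient A X != reorient A Y by rewrite (inj_eq (@reorient_inj A)).
have nXnY' : reorient A X != negs (reorient A Y).
  by rewrite -reorient_negs (inj_eq (@reorient_inj A)).
suff [Z ZC [Z1 Z2]] : exists2 Z, Z \in C &
    Z.1 \subset ((reorient A X).1 :|: (reorient A Y).1) :\ e /\
    Z.2 \subset ((reorient A X).2 :|: (reorient A Y).2) :\ e.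
  exists (reorient A Z); first by rewrite mem_reor reorientK.
  by have := reorient_elim_bound A Z1 Z2; rewrite !reorientK.
have [eA|eA] := boolP (e \in A).
- have eX' : e \in (reorient A X).2 by rewrite !inE eA eX orbT.
  have eY' : e \in (reorient A Y).1 by rewrite !inE eA eY orbT.
  have nYnX' : reorient A Y != negs (reorient A X).
    by apply: contra nXnY' => /eqP->; case: (reorient A X).
  have nYX' : reorient A Y != reorient A X by rewrite eq_sym.
  have [Z ZC [Z1 Z2]] := elimC _ _ e YC XC nYnX' nYX' eY' eX'.
  by exists Z => //; split; rewrite setUC.
have eX' : e \in (reorient A X).1 by rewrite !inE eA eX.
have eY' : e \in (reorient A Y).2 by rewrite !inE eA eY.
have [Z ZC [Z1 Z2]] := elimC _ _ e XC YC nXnY' nXY' eX' eY'.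
by exists Z.
Qed.

Lemma supp_elim e X Y Z :
    Z.1 \subset (X.1 :|: Y.1) :\ e -> Z.2 \subset (X.2 :|: Y.2) :\ e ->
  supp Z \subset (supp X :|: supp Y) :\ e.
Proof.
move=> /subsetP Z1 /subsetP Z2; apply/subsetP => x.
by move: (Z1 x) (Z2 x); rewrite !inE; case: (x == e); in_cases.
Qed.

Lemma con_cands_reor A N C : con_cands N (reor A C) = reor A (con_cands N C).
Proof.
apply/setP => Z; rewrite mem_reor; apply/imsetP/imsetP => -[Y].
- rewrite inE mem_reor => /andP[YC Yn] ->; exists (reorient A Y).
    by rewrite inE YC supp_reorient.
  exact: reorient_contract.
- rewrite inE => /andP[YC Yn] eqZ; exists (reorient A Y).
    by rewrite inE mem_reor reorientK YC supp_reorient.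
  by rewrite -[Z](reorientK A) eqZ; apply: reorient_contract.
Qed.

Lemma con_reor A N C : reor A (con N C) = con N (reor A C).
Proof.
apply/setP => Z; rewrite mem_reor !inE con_cands_reor mem_reor; congr andb.
apply/forall_inP/forall_inP => minZ W.
- by rewrite mem_reor => /minZ; rewrite !supp_reorient.
- by move=> WC; have := minZ (reorient A W); rewrite mem_reor reorientK !supp_reorient; apply.
Qed.

Lemma del_reor A D C : reor A (del D C) = del D (reor A C).
Proof. by apply/setP => Y; rewrite mem_reor !inE mem_reor supp_reorient. Qed.

Lemma MkE C k N A : Mk C k N A = con N (del (Ek m k :\: N) (reor A C)).
Proof. by rewrite /Mk con_reor del_reor. Qed.

End SignedCircuits.

Section Minors.
Variables (m : nat) (C : {set signed m}) (D N : {set 'I_m}).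
Implicit Types (X Y Z V : signed m).
Hypothesis elimC : circuit_elim C.
Hypothesis indepN : forall X, X \in C -> ~~ (supp X \subset N).

Definition pos_witness : bool :=
  [exists Y in C, [&& supp Y \subset ~: D, Y.2 \subset N & ~~ (supp Y \subset N)]].

Lemma pos_witness_shrink Y Y' :
    Y \in C -> supp Y \subset ~: D -> Y.2 \subset N ->
    Y' \in C -> supp Y' \subset ~: D -> supp Y' :\: N \proper supp Y :\: N ->
  exists2 V, V \in C &
    [&& supp V \subset ~: D, V.2 \subset N & supp V :\: N \proper supp Y :\: N].
Proof.
move=> YC YD Y2N Y'C Y'D Y'Y.
pose P V := [&& V \in C, supp V \subset ~: D & supp V :\: N \proper supp Y :\: N].
have PY' : P Y' by rewrite /P Y'C Y'D.
case: (arg_minnP (fun V => #|V.2 :\: N|) PY') => V /and3P[VC VD VY] Vmin.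
have [V2N|[f]] := set_0Vmem (V.2 :\: N).
  by exists V => //; rewrite VD VY -setD_eq0 V2N eqxx.
rewrite inE => /andP[fN fV].
have fY : f \in Y.1.
  have : f \in supp Y :\: N by apply: (subsetP (proper_sub VY)); rewrite !inE fN fV orbT.
  by rewrite !inE fN => /orP[// | /(subsetP Y2N)]; rewrite (negbTE fN).
have nYV : Y != V by apply: contraTneq VY => <-; rewrite properxx.
have nYnV : Y != negs V by apply: contraTneq VY => ->; rewrite supp_negs properxx.
have [Z ZC [Z1 Z2]] := elimC YC VC nYnV nYV fY fV.
have sZ := supp_elim Z1 Z2.
have ZN : supp Z :\: N \subset (supp Y :\: N) :\ f.
  apply/subsetP => x; rewrite in_setD => /andP[xN /(subsetP sZ)].
  rewrite in_setD1 in_setU in_setD1 in_setD xN => /andP[-> /orP[// | xV]].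
  by move: (subsetP (proper_sub VY) x); rewrite !in_setD xN xV; apply.
have fYN : f \in supp Y :\: N by rewrite in_setD fN /supp in_setU fY.
have PZ : P Z.
  rewrite /P ZC (sub_proper_trans ZN (properD1 fYN)) andbT.
  by rewrite (subset_trans sZ) // (subset_trans (subD1set _ _)) // subUset YD.
have Z2N : Z.2 :\: N \proper V.2 :\: N.
  apply: sub_proper_trans (properD1 (_ : f \in V.2 :\: N)); last by rewrite in_setD fN.
  apply/subsetP => x; rewrite in_setD => /andP[xN /(subsetP Z2)].
  rewrite in_setD1 in_setU in_setD1 in_setD xN => /andP[-> /orP[/(subsetP Y2N) | //]].
  by rewrite (negbTE xN).
by have := Vmin Z PZ; rewrite leqNgt proper_card.
Qed.

Lemma acyclic_conE : acyclic (con N (del D C)) = ~~ pos_witness.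
Proof.
apply/idP/idP => [acyc | /exists_inPn nowit]; last first.
  apply/forall_inP => Z; rewrite inE => /andP[/imsetP[Y + ->] _].
  rewrite !inE => /andP[/andP[YC YD] YN] /=; apply: contra (nowit Y YC) => /eqP Y2N.
  by rewrite YD -setD_eq0 Y2N eqxx -setD_eq0.
apply/exists_inP => -[Y0 Y0C /and3P[Y0D Y02 _]].
pose P Y := [&& Y \in C, supp Y \subset ~: D & Y.2 \subset N].
have PY0 : P Y0 by rewrite /P Y0C Y0D.
case: (arg_minnP (fun Y => #|supp Y :\: N|) PY0) => Y /and3P[YC YD Y2N] Ymin.
have YN : supp Y :\: N != set0 by rewrite setD_eq0 indepN.
have Ycon : contract_signed N Y \in con N (del D C).
  rewrite inE imset_f ?inE ?YC ?YD //=; apply/forall_inP => W /imsetP[Y'].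
  rewrite !inE => /andP[/andP[Y'C Y'D] _] -> /=; apply/negP => Y'Y.
  rewrite -/(contract_signed N Y') !supp_contract in Y'Y.
  have [V VC /and3P[VD V2N VY]] := pos_witness_shrink YC YD Y2N Y'C Y'D Y'Y.
  by have := Ymin V; rewrite /P VC VD V2N => /(_ isT); rewrite leqNgt (proper_card VY).
move/forall_inP: acyc => /(_ _ Ycon) /=.
by rewrite -setD_eq0 in Y2N; rewrite (eqP Y2N) eqxx.
Qed.

End Minors.

Section Prefixes.
Variable m : nat.
Implicit Types (A N : {set 'I_m}) (e : 'I_m).

Lemma Ek_notin e : e \notin Ek m e.
Proof. by rewrite inE ltnn. Qed.

Lemma Ek0 : Ek m 0 = set0.
Proof. by apply/setP => x; rewrite !inE. Qed.

Lemma EkT : Ek m m = setT.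
Proof. by apply/setP => x; rewrite !inE ltn_ord. Qed.

Lemma mem_EkS e : e \in Ek m e.+1.
Proof. by rewrite inE ltnS. Qed.

Lemma EkS e : Ek m e.+1 = e |: Ek m e.
Proof. by apply/setP => x; rewrite !inE ltnS leq_eqVlt. Qed.

Lemma subset_EkS e : Ek m e \subset Ek m e.+1.
Proof. by rewrite EkS subsetUr. Qed.

Lemma subset_Ek_notin e N : N \subset Ek m e.+1 -> e \notin N -> N \subset Ek m e.
Proof.
rewrite EkS => sN eN; apply/subsetP => x xN.
by move: (subsetP sN x xN); rewrite in_setU1 => /predU1P[xe | //]; rewrite -xe xN in eN.
Qed.

Lemma EkS_setD e N : e \notin N -> Ek m e.+1 :\: N = e |: (Ek m e :\: N).
Proof. by move=> eN; rewrite EkS setDUl (setDidPl _) // disjoints1. Qed.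

Lemma EkS_setDU1 e N : Ek m e.+1 :\: (e |: N) = Ek m e :\: N.
Proof.
apply/setP => x; rewrite EkS !(in_setD, in_setU1).
by case: (eqVneq x e) => [->|]; rewrite ?(negbTE (Ek_notin e)) ?andbF.
Qed.

Lemma subset_compl_EkS e A : A \subset ~: Ek m e -> e \notin A -> A \subset ~: Ek m e.+1.
Proof.
move=> AE eA; apply/subsetP => x xA; rewrite EkS setCU in_setI (subsetP AE) // andbT.
by rewrite in_setC1; apply/eqP => xe; move: eA; rewrite -xe xA.
Qed.

Lemma EkS_setD1 e N : e \in N -> Ek m e :\: (N :\ e) = Ek m e.+1 :\: N.
Proof. by move=> eN; rewrite -{2}(setD1K eN) EkS_setDU1. Qed.

End Prefixes.

Section NBCSets.
Variables (m : nat) (C : {set signed m}).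
Implicit Types (A N : {set 'I_m}) (X : signed m).
Hypothesis C_nonempty : (set0, set0) \notin C.

Lemma NBC_broken N X g :
    NBC C N -> X \in C -> g \in supp X -> {in supp X, forall f : 'I_m, f <= g} ->
  ~~ (supp X :\ g \subset N).
Proof.
move=> /exists_inPn/(_ X) nbc XC gX gmax; apply: contra (nbc XC) => Xg.
by apply/exists_inP; exists g; rewrite // Xg andbT; apply/forall_inP.
Qed.

Lemma NBC_indep N X : NBC C N -> X \in C -> ~~ (supp X \subset N).
Proof.
move=> nbcN XC; have [X0|[g0 g0X]] := set_0Vmem (supp X).
  case: X XC X0 => X1 X2 XC /eqP; rewrite setU_eq0 /= => /andP[/eqP X1E /eqP X2E].
  by rewrite X1E X2E (negbTE C_nonempty) in XC.
have [g gX gmax] := arg_maxnP (fun i : 'I_m => nat_of_ord i) g0X.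
apply: contra (NBC_broken nbcN XC gX gmax) => XN.
exact: subset_trans (subD1set _ _) XN.
Qed.

Lemma NBC_reor_indep A N X : NBC C N -> X \in reor A C -> ~~ (supp X \subset N).
Proof. by rewrite mem_reor => nbcN /(NBC_indep nbcN); rewrite supp_reorient. Qed.

Lemma NBC0 : (forall X, X \in C -> #|supp X| != 1) -> NBC C set0.
Proof.
move=> loopless; apply/exists_inPn => X XC; apply/exists_inPn => g gX.
rewrite subset0 andbC; apply: contraNN (loopless X XC) => /andP[/eqP Xg _].
by rewrite -(setD1K gX) Xg setU0 cards1.
Qed.

Lemma subset_NBC N N' : N' \subset N -> NBC C N -> NBC C N'.
Proof.
move=> sN; apply: contra => /exists_inP[X XC /exists_inP[g gX /andP[gmax XN]]].
apply/exists_inP; exists X => //.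
by apply/exists_inP; exists g; rewrite // gmax (subset_trans XN).
Qed.

Lemma NBC_setU1_indep N (e : 'I_m) X :
  NBC C N -> N \subset Ek m e -> X \in C -> ~~ (supp X \subset e |: N).
Proof.
move=> nbcN NE XC; apply/negP => XeN.
have [eX|eX] := boolP (e \in supp X).
  have emax : {in supp X, forall f : 'I_m, f <= e}.
    move=> f /(subsetP XeN); rewrite in_setU1 => /predU1P[-> // | /(subsetP NE)].
    by rewrite inE => /ltnW.
  by move/negP: (NBC_broken nbcN XC eX emax); apply; rewrite subDset.
move/negP: (NBC_indep nbcN XC); apply; apply/subsetP => x xX.
by move: (subsetP XeN x xX); rewrite in_setU1 => /predU1P[xe | //]; rewrite -xe xX in eX.
Qed.

End NBCSets.

Section Witnesses.
Variables (m : nat) (C : {set signed m}).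
Implicit Types (A D N : {set 'I_m}) (X Y Z p q : signed m) (e : 'I_m).
Hypotheses (C_nonempty : (set0, set0) \notin C) (disjC : signs_disjoint C).
Hypotheses (negsC : forall X, X \in C -> negs X \in C) (elimC : circuit_elim C).

Lemma Mk_acyclicE k N A : NBC C N ->
  acyclic (Mk C k N A) = ~~ pos_witness (reor A C) (Ek m k :\: N) N.
Proof.
move=> nbcN; rewrite MkE acyclic_conE //; first exact: reor_elim.
by move=> X; apply: NBC_reor_indep.
Qed.

Lemma mem_NN k p :
  (p \in NN C k) = [&& p.1 \subset Ek m k, p.2 \subset ~: Ek m k, NBC C p.1 &
                      ~~ pos_witness (reor p.2 C) (Ek m k :\: p.1) p.1].
Proof.
rewrite inE; case nbc: (NBC C p.1); last by rewrite !andbF.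
by rewrite Mk_acyclicE.
Qed.

Lemma acyclic_reor1_Mk N A e : e \notin A -> NBC C N ->
  acyclic (reor [set e] (Mk C e N A)) =
  ~~ pos_witness (reor (e |: A) C) (Ek m e :\: N) N.
Proof. by move=> eA nbcN; rewrite /Mk -reorU1 // -/(Mk C e N (e |: A)) Mk_acyclicE. Qed.

Lemma pos_witness_mono A A' D D' N : D \subset D' -> {in ~: D', A =i A'} ->
  pos_witness (reor A C) D' N -> pos_witness (reor A' C) D N.
Proof.
move=> sD eqA /exists_inP[Y YC /and3P[YD Y2 YN]]; apply/exists_inP; exists Y.
  move: YC; rewrite !mem_reor (@eq_in_reorient _ A A') // => x /(subsetP YD).
  exact: eqA.
by rewrite Y2 YN (subset_trans YD) ?setCS.
Qed.

Lemma pos_witness_subset A D N N' : NBC C N -> N' \subset N ->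
  pos_witness (reor A C) D N' -> pos_witness (reor A C) D N.
Proof.
move=> nbcN sN /exists_inP[Y YC /and3P[YD Y2 _]]; apply/exists_inP; exists Y => //.
by rewrite YD (subset_trans Y2 sN) (NBC_reor_indep _ nbcN YC).
Qed.

Lemma pos_witness_reorU1 A D N e : e \notin A -> e \in N ->
  pos_witness (reor (e |: A) C) D N -> pos_witness (reor A C) D N.
Proof.
move=> eA eN /exists_inP[Y YC /and3P[YD Y2 YN]].
apply/exists_inP; exists (reorient [set e] Y).
  by move: YC; rewrite reorU1 // mem_reor.
rewrite supp_reorient YD YN andbT; apply/subsetP => x.
by rewrite !inE => /orP[/andP[_ /(subsetP Y2)] | /andP[_ /eqP->]].
Qed.

Lemma reor_orient A X g : X \in reor A C ->
  exists2 Y, Y \in reor A C & supp Y = supp X /\ g \notin Y.2.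
Proof.
move=> XC; have [gX2|gX2] := boolP (g \in X.2); last by exists X.
exists (negs X); last by rewrite supp_negs (disjointFl (reor_disjoint disjC XC) gX2).
by move: XC; rewrite !mem_reor reorient_negs; apply: negsC.
Qed.

Lemma pos_witness_setU1 A D N e Y : e \notin A -> Y \in reor A C ->
    supp Y \subset ~: D -> Y.2 \subset e |: N -> ~~ (supp Y \subset N) ->
  pos_witness (reor A C) D N || pos_witness (reor (e |: A) C) D N.
Proof.
move=> eA YC YD /subsetP Y2 YN.
have [eY2|eY2] := boolP (e \in Y.2); apply/orP; [right | left]; apply/exists_inP.
  exists (reorient [set e] Y); first by rewrite reorU1 // mem_reor reorientK.
  rewrite supp_reorient YD YN andbT; apply/subsetP => x; rewrite !inE.
  case: (eqVneq x e) => [->|xe] /=; first by rewrite (disjointFl (reor_disjoint disjC YC) eY2).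
  by rewrite andbF orbF => /Y2; rewrite in_setU1 (negbTE xe).
exists Y; rewrite // YD YN andbT; apply/subsetP => x xY.
by move: (Y2 x xY); rewrite in_setU1 => /predU1P[xe|//]; rewrite -xe xY in eY2.
Qed.

End Witnesses.

Section PsiSteps.
Variables (m : nat) (C : {set signed m}).
Implicit Types (D : {set 'I_m}) (X Y : signed m).
Hypotheses (C_nonempty : (set0, set0) \notin C) (disjC : signs_disjoint C).
Hypotheses (negsC : forall X, X \in C -> negs X \in C) (elimC : circuit_elim C).
Variables (N A : {set 'I_m}) (e : 'I_m).
Hypotheses (nbcN : NBC C N) (NE : N \subset Ek m e) (eA : e \notin A).

Let eN : e \notin N. Proof. exact: contra (subsetP NE e) (Ek_notin e). Qed.

Section BothOrientationsAcyclic.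
Hypothesis nowitA : ~~ pos_witness (reor A C) (Ek m e :\: N) N.
Hypothesis nowitAe : ~~ pos_witness (reor (e |: A) C) (Ek m e :\: N) N.

Let no_flip_witness Y : Y \in reor A C -> supp Y \subset ~: (Ek m e :\: N) ->
  Y.2 \subset e |: N -> supp Y \subset N.
Proof.
move=> YC YD Y2; move: (pos_witness_setU1 disjC eA YC YD Y2) => /contraNT; apply.
by rewrite negb_or nowitA nowitAe.
Qed.

Lemma NBC_setU1 : NBC C (e |: N).
Proof.
apply/exists_inP => -[X0 X0C /exists_inP[g gX /andP[/forall_inP gmax X0g]]].
have [eX eg] : e \in supp X0 /\ e != g.
  have : e \in supp X0 :\ g.
    move: (NBC_broken nbcN X0C gX gmax); apply: contraNT => eX.
    apply/subsetP => x xX; move: (subsetP X0g x xX).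
    by rewrite in_setU1 => /predU1P[xe|//]; rewrite -xe xX in eX.
  by rewrite in_setD1 => /andP[].
have lt_eg : e < g by rewrite ltn_neqAle eg gmax.
have X0A : reorient A X0 \in reor A C by rewrite mem_reor reorientK.
have [X XC [+ gX2]] := reor_orient disjC negsC g X0A; rewrite supp_reorient => sX.
have XN : ~~ (supp X \subset N) by rewrite sX; apply: contra eN => /subsetP; apply.
move/negP: XN; apply; apply: no_flip_witness XC _ _.
  rewrite sX; apply/subsetP => x xX; rewrite !inE negb_and negbK.
  case: (eqVneq x g) => [->|xg]; first by rewrite -leqNgt (ltnW lt_eg) orbT.
  have : x \in supp X0 :\ g by rewrite in_setD1 xg.
  by move/(subsetP X0g); rewrite in_setU1 => /predU1P[->|->]; rewrite ?ltnn ?orbT.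
apply/subsetP => x xX2; apply: (subsetP X0g); rewrite in_setD1 -sX /supp in_setU xX2 orbT.
by rewrite andbT; apply: contra gX2 => /eqP <-.
Qed.

Lemma no_witness_setU1 : ~~ pos_witness (reor A C) (Ek m e.+1 :\: (e |: N)) (e |: N).
Proof.
rewrite EkS_setDU1; apply/exists_inP => -[Y YC /and3P[YD Y2 YN]].
by move/negP: YN; apply; apply: subset_trans (no_flip_witness YC YD Y2) (subsetUr _ _).
Qed.

End BothOrientationsAcyclic.

Lemma pos_witness_elim D X Y :
    X \in reor A C -> Y \in reor A C -> supp X \subset ~: D -> supp Y \subset ~: D ->
    X.2 \subset N -> Y.2 \subset e |: N -> e \in X.1 -> e \in Y.2 ->
  pos_witness (reor A C) (e |: D) N.
Proof.
move=> XC YC XD YD X2 Y2 eX eY.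
have nXY : X != Y.
  by apply: contraTneq eX => ->; rewrite (disjointFl (reor_disjoint disjC YC) eY).
have nXnY : X != negs Y.
  apply/eqP => XY; move: XC; rewrite mem_reor => /(NBC_setU1_indep C_nonempty nbcN NE).
  by rewrite supp_reorient /supp {1}XY /= subUset Y2 (subset_trans X2) ?subsetUr.
have [Z ZC [Z1 Z2]] := reor_elim elimC XC YC nXnY nXY eX eY.
apply/exists_inP; exists Z => //; rewrite (NBC_reor_indep C_nonempty nbcN ZC) andbT.
apply/andP; split; apply/subsetP => x.
  move/(subsetP (supp_elim Z1 Z2)); rewrite in_setD1 in_setU.
  by case/andP=> xe /orP[/(subsetP XD) | /(subsetP YD)]; rewrite !inE (negbTE xe).
move/(subsetP Z2); rewrite in_setD1 in_setU.
case/andP=> xe /orP[/(subsetP X2) // | /(subsetP Y2)].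
by rewrite in_setU1 (negbTE xe).
Qed.

Lemma pos_witness_reorU1_exclusive D : ~~ pos_witness (reor A C) (e |: D) N ->
  pos_witness (reor (e |: A) C) D N -> ~~ pos_witness (reor A C) D N.
Proof.
move=> nowit /exists_inP[Y0 Y0C /and3P[Y0D Y02 _]].
apply/exists_inP => -[X XC /and3P[XD X2 _]].
have avoid W : W \in reor A C -> supp W \subset ~: D -> W.2 \subset N -> e \in supp W.
  move=> WC WD W2; apply: contraNT nowit => eW; apply/exists_inP; exists W => //.
  rewrite W2 (NBC_reor_indep C_nonempty nbcN WC) !andbT; apply/subsetP => x xW.
  move: (subsetP WD x xW); rewrite !inE negb_or => ->; rewrite andbT.
  by apply: contraNneq eW => <-.
have positive W : e \in supp W -> W.2 \subset N -> e \in W.1.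
  by move=> + W2; rewrite /supp in_setU => /orP[// | /(subsetP W2)]; rewrite (negbTE eN).
have eY0 : e \in supp Y0.
  have [//|eY0] := boolP (e \in supp Y0).
  suff Y0A : Y0 \in reor A C by have := avoid Y0 Y0A Y0D Y02; rewrite (negbTE eY0).
  move: Y0C; rewrite !mem_reor (@eq_in_reorient _ (e |: A) A) // => x xY.
  rewrite in_setU1; have [xe|//] := eqVneq x e.
  by move: eY0; rewrite -xe xY.
have YC : reorient [set e] Y0 \in reor A C.
  by move: Y0C; rewrite reorU1 // [Y0 \in _]mem_reor.
move/negP: nowit; apply; apply: (pos_witness_elim XC YC XD) => //.
- by rewrite supp_reorient.
- apply/subsetP => x; rewrite !inE => /orP[/andP[_ /(subsetP Y02) ->] | /andP[_ ->]] //.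
  by rewrite orbT.
- exact: positive (avoid X XC XD X2) X2.
- by rewrite !inE eqxx positive.
Qed.

End PsiSteps.

Section PsiBijection.
Variables (m : nat) (C : {set signed m}).
Implicit Types (p q : signed m).
Hypotheses (C_nonempty : (set0, set0) \notin C) (disjC : signs_disjoint C).
Hypotheses (negsC : forall X, X \in C -> negs X \in C) (elimC : circuit_elim C).
Variable e : 'I_m.

Let memNN := mem_NN C_nonempty elimC.
Let acyclic_flipE := acyclic_reor1_Mk C_nonempty elimC.

Definition psi_inv q : signed m :=
  if e \in q.1 then (q.1 :\ e, q.2)
  else if acyclic (reor [set e] (Mk C e q.1 q.2)) then (q.1, e |: q.2) else q.

Lemma psi_NN p : p \in NN C e -> psi C e p \in NN C e.+1.
Proof.
case: p => N A; rewrite memNN /= => /and4P[NE AE nbcN nowit].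
have NE' : N \subset Ek m e.+1 := subset_trans NE (subset_EkS e).
have nowit' (A' : {set 'I_m}) : {in ~: (Ek m e.+1 :\: N), A' =i A} ->
    ~~ pos_witness (reor A' C) (Ek m e.+1 :\: N) N.
  by move=> eqA; apply: contra nowit; apply: pos_witness_mono; rewrite ?setSD ?subset_EkS.
rewrite /psi /=; case: ifPn => eA; last first.
  have eqA : {in ~: (Ek m e.+1 :\: N), A :\ e =i A}.
    move=> x; rewrite EkS_setD; last exact: contra (subsetP NE e) (Ek_notin e).
    by rewrite !inE negb_or => /andP[xe _]; rewrite xe.
  rewrite memNN /= NE' nbcN nowit' // subset_compl_EkS ?setD11 //.
  exact: subset_trans (subD1set _ _) AE.
rewrite acyclic_flipE //; have AE' := subset_compl_EkS AE eA.
case: ifPn => nowitAe; last by rewrite memNN /= NE' AE' nbcN nowit'.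
rewrite memNN /= AE' (NBC_setU1 disjC negsC nbcN NE eA nowit nowitAe).
rewrite (no_witness_setU1 disjC eA nowit nowitAe).
by rewrite EkS setUS.
Qed.

Lemma psiK : {in NN C e, cancel (psi C e) psi_inv}.
Proof.
case=> N A; rewrite memNN /= => /and4P[NE _ nbcN nowit].
have eN : e \notin N := contra (subsetP NE e) (Ek_notin e).
rewrite /psi /=; case: ifPn => [eA | /negPn eA].
  by case: ifPn => ac; rewrite /psi_inv /= ?setU11 ?setU1K // (negbTE eN) (negbTE ac).
by rewrite /psi_inv /= (negbTE eN) acyclic_flipE ?setD11 // setD1K // nowit.
Qed.

Lemma psi_invK : {in NN C e.+1, cancel psi_inv (psi C e)}.
Proof.
case=> N A; rewrite memNN /= => /and4P[NE AE nbcN nowit].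
have eA : e \notin A by apply/negP => /(subsetP AE); rewrite inE mem_EkS.
rewrite /psi_inv /=; case: ifPn => eN; last first.
  by case: ifPn => ac; rewrite /psi /= ?setU11 ?setU1K // eA (negbTE ac).
rewrite /psi /= eA acyclic_flipE ?setD1K //; last exact: subset_NBC (subD1set _ _) nbcN.
rewrite EkS_setD1 // ifT //; apply: contra nowit.
by move/(pos_witness_subset C_nonempty nbcN (subD1set _ _)); apply: pos_witness_reorU1.
Qed.

Lemma psi_inv_NN q : q \in NN C e.+1 -> psi_inv q \in NN C e.
Proof.
case: q => N A; rewrite memNN /= => /and4P[NE AE nbcN nowit].
have eA : e \notin A by apply/negP => /(subsetP AE); rewrite inE mem_EkS.
have AE' : A \subset ~: Ek m e by apply: subset_trans AE _; rewrite setCS subset_EkS.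
rewrite /psi_inv /=; case: ifPn => eN.
  have nbcN' : NBC C (N :\ e) := subset_NBC (subD1set _ _) nbcN.
  rewrite memNN /= AE' nbcN' subset_Ek_notin ?setD11 ?(subset_trans (subD1set _ _) NE) //=.
  rewrite EkS_setD1 //; apply: contra nowit.
  by move/(pos_witness_subset C_nonempty nbcN (subD1set _ _)).
have NE' := subset_Ek_notin NE eN.
rewrite acyclic_flipE //; case: ifPn => ac.
  by rewrite memNN /= NE' nbcN ac subUset sub1set inE Ek_notin AE'.
have excl := pos_witness_reorU1_exclusive C_nonempty disjC elimC nbcN NE' eA.
rewrite memNN /= NE' AE' nbcN excl //; first by rewrite -EkS_setD.
by rewrite negbK in ac.
Qed.

Lemma psi_bij :
  [/\ forall p, p \in NN C e -> psi C e p \in NN C e.+1,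
      {in NN C e &, injective (psi C e)} &
      forall q, q \in NN C e.+1 -> exists2 p, p \in NN C e & psi C e p = q].
Proof.
split; [exact: psi_NN | exact: can_in_inj psiK | move=> q qN].
by exists (psi_inv q); [apply: psi_inv_NN | apply: psi_invK].
Qed.

End PsiBijection.

Section Composition.
Variables (m : nat) (C : {set signed m}).
Implicit Types (A : {set 'I_m}) (p q : signed m).
Hypotheses (C_nonempty : (set0, set0) \notin C) (disjC : signs_disjoint C).
Hypotheses (negsC : forall X, X \in C -> negs X \in C) (elimC : circuit_elim C).

Let memNN := mem_NN C_nonempty elimC.

Definition psi_upto j p : signed m :=
  foldl (fun p e => psi C e p) p (take j (enum 'I_m)).

Lemma psi_uptoS j (lt_jm : j < m) p :
  psi_upto j.+1 p = psi C (Ordinal lt_jm) (psi_upto j p).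
Proof.
rewrite /psi_upto (take_nth (Ordinal lt_jm)) ?size_enum_ord // foldl_rcons.
by congr psi; apply: val_inj; rewrite /= nth_enum_ord.
Qed.

Lemma psi_upto_bij j : j <= m ->
  [/\ forall p, p \in NN C 0 -> psi_upto j p \in NN C j,
      {in NN C 0 &, injective (psi_upto j)} &
      forall q, q \in NN C j -> exists2 p, p \in NN C 0 & psi_upto j p = q].
Proof.
elim: j => [_ | j IHj lt_jm].
  rewrite /psi_upto take0; split=> // q qN; by exists q.
have [maps inj surj] := IHj (ltnW lt_jm).
have [maps1 inj1 surj1] := psi_bij C_nonempty disjC negsC elimC (Ordinal lt_jm).
split=> [p pN | p p' pN p'N | q /surj1[q' /surj[p pN <-] <-]]; rewrite ?psi_uptoS.
- exact/maps1/maps.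
- by move/(inj1 _ _ (maps _ pN) (maps _ p'N)); apply: inj.
- by exists p; rewrite ?psi_uptoS.
Qed.

Lemma psi_allE A : psi_all C A = psi_upto m (set0, A).
Proof. by rewrite /psi_all /psi_upto take_oversize // size_enum_ord. Qed.

Lemma mem_NN0 p : (forall X, X \in C -> #|supp X| != 1) ->
  (p \in NN C 0) = (p.1 == set0) && (p.2 \in AM C).
Proof.
move=> loopless; rewrite memNN Ek0 subset0 setC0 subsetT /=.
case: eqP => [-> | _] //=; rewrite NBC0 // setD0 inE negb_exists_in.
apply: eq_forallb_in => X XC; rewrite setC0 subsetT subset0.
by rewrite (NBC_reor_indep C_nonempty (NBC0 loopless) XC) andbT.
Qed.

Lemma mem_NNm q : (q \in NN C m) = (q.2 == set0) && NBC C q.1.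
Proof.
rewrite memNN EkT subsetT setCT subset0; case nbc: (NBC C q.1); rewrite ?andbF //=.
suff -> : pos_witness (reor q.2 C) (setT :\: q.1) q.1 = false by rewrite andbT.
apply/exists_inP => -[Y YC]; apply/negP.
by rewrite setTD setCK (negbTE (NBC_reor_indep C_nonempty nbc YC)).
Qed.

End Composition.

Theorem mainTheorem1 (m : nat) (C : {set signed m})
  (hOM : is_OM [set: 'I_m] C) (hloop : loopless C) :
  (forall e : 'I_m,
     [/\ (forall p, p \in NN C e -> psi C e p \in NN C e.+1),
         {in NN C e &, injective (psi C e)} &
         (forall q, q \in NN C e.+1 -> exists2 p, p \in NN C e & psi C e p = q)])
  /\
  [/\ (forall A, A \in AM C -> (psi_all C A).2 = set0),
      {in AM C &, injective (fun A => (psi_all C A).1)} &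
      [set (psi_all C A).1 | A in AM C] = NBCset C].
Proof.
have [signsC C_nonempty negsC _ elimC] := hOM.
have disjC : signs_disjoint C by move=> X /signsC[].
split=> [e | ]; first exact: psi_bij.
have [maps inj surj] := psi_upto_bij C_nonempty disjC negsC elimC (leqnn m).
have NN0 A : ((set0, A) \in NN C 0) = (A \in AM C).
  by rewrite (mem_NN0 C_nonempty elimC) ?eqxx.
have psi_allP A : A \in AM C -> (psi_all C A).2 = set0 /\ NBC C (psi_all C A).1.
  by rewrite -NN0 psi_allE => /maps; rewrite (mem_NNm C_nonempty elimC) => /andP[/eqP].
split=> [A /psi_allP[] // | A A' AM AM' /= eq1 |].
  have [[A0 _] [A'0 _]] := (psi_allP A AM, psi_allP A' AM').
  have : psi_all C A = psi_all C A'.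
    by rewrite [LHS]surjective_pairing eq1 A0 -A'0 -surjective_pairing.
  rewrite !psi_allE => /inj; rewrite !NN0 => /(_ AM AM').
  by case.
apply/setP => N; rewrite inE; apply/imsetP/idP => [[A /psi_allP[_ ?] ->] // | nbcN].
have NmN : (N, set0) \in NN C m by rewrite (mem_NNm C_nonempty elimC) eqxx.
have [[N0 A]] := surj _ NmN.
rewrite (mem_NN0 C_nonempty elimC) // => /andP[/eqP /= -> AM] eqN.
by exists A; rewrite // psi_allE eqN.
Qed.
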